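(* Let $(V,L,\varphi,E)$ be a valuation system and let $$\Pi L:=\{\textstyle\bigwedge_n a_n \;:\; a_1\ge a_2\ge\cdots \text{ is a } \varphi\text{-convergent sequence in } L\}.$$ Then $\Pi L$ is a sublattice of $V$, and $L$ is a sublattice of $\Pi L$.
   Context: A valuation system $(V,L,\varphi,E)$ consists of: (i) a lattice $V$ which is $\sigma$-distributive, i.e. for every $a\in V$ and every sequence $(b_n)$ in $V$ whose infimum exists, $\bigwedge_n(a\vee b_n)$ exists and equals $a\vee\bigwedge_n b_n$, and dually whenever $\bigvee_n b_n$ exists, $\bigvee_n(a\wedge b_n)$ exists and equals $a\wedge\bigvee_n b_n$; (ii) a sublattice $L$ of $V$; (iii) a partially ordered abelian group $E$ which is R-complete: whenever $x_1\ge x_2\ge\cdots$ and $y_1\ge y_2\ge\cdots$ are sequences in $E$ for which $\bigwedge_n(x_n+y_n)$ exists, then $\bigwedge_n x_n$ and $\bigwedge_n y_n$ exist, and dually for increasing sequences and suprema; (iv) a valuation $\varphi:L\to E$, i.e. an order-preserving map with $\varphi(a\wedge b)+\varphi(a\vee b)=\varphi(a)+\varphi(b)$ for all $a,b\in L$. A decreasing sequence $a_1\ge a_2\ge\cdots$ in $L$ is $\varphi$-convergent if $\bigwedge_n a_n$ exists in $V$ and $\bigwedge_n\varphi(a_n)$ exists in $E$. *)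

From HB Require Import structures.
From mathcomp Require Import all_boot all_order all_algebra.
Set Implicit Arguments. Unset Strict Implicit. Unset Printing Implicit Defensive.
Import Order.TTheory GRing.Theory.
Local Open Scope order_scope.

Definition is_inf {d} {T : porderType d} (s : nat -> T) (x : T) : Prop :=
  (forall n, x <= s n) /\ (forall y, (forall n, y <= s n) -> y <= x).
Definition is_sup {d} {T : porderType d} (s : nat -> T) (x : T) : Prop :=
  (forall n, s n <= x) /\ (forall y, (forall n, s n <= y) -> x <= y).

Definition decreasing {d} {T : porderType d} (s : nat -> T) : Prop :=
  forall n, s n.+1 <= s n.
Definition increasing {d} {T : porderType d} (s : nat -> T) : Prop :=
  forall n, s n <= s n.+1.

Definition sigma_distributive {d} (V : latticeType d) : Prop :=
  (forall (a : V) (b : nat -> V) x, is_inf b x -> is_inf (fun n => a `|` b n) (a `|` x)) /\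
  (forall (a : V) (b : nat -> V) x, is_sup b x -> is_sup (fun n => a `&` b n) (a `&` x)).

Definition sublattice {d} (V : latticeType d) (L : V -> Prop) : Prop :=
  forall a b, L a -> L b -> L (a `&` b) /\ L (a `|` b).

Definition po_group (E : porderZmodType) : Prop :=
  forall x y z : E, x <= y -> (x + z)%R <= (y + z)%R.

Definition R_complete (E : porderZmodType) : Prop :=
  (forall x y : nat -> E, decreasing x -> decreasing y ->
     (exists z, is_inf (fun n => (x n + y n)%R) z) ->
     (exists u, is_inf x u) /\ (exists v, is_inf y v)) /\
  (forall x y : nat -> E, increasing x -> increasing y ->
     (exists z, is_sup (fun n => (x n + y n)%R) z) ->
     (exists u, is_sup x u) /\ (exists v, is_sup y v)).

(* valuation phi : L -> E (phi given on all of V, only its values on L matter) *)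
Definition valuation {d} (V : latticeType d) (L : V -> Prop) (E : porderZmodType)
  (phi : V -> E) : Prop :=
  (forall a b, L a -> L b -> a <= b -> phi a <= phi b) /\
  (forall a b, L a -> L b -> (phi (a `&` b) + phi (a `|` b))%R = (phi a + phi b)%R).

Definition valuation_system {d} (V : latticeType d) (L : V -> Prop) (E : porderZmodType)
  (phi : V -> E) : Prop :=
  sigma_distributive V /\ sublattice L /\ po_group E /\ R_complete E /\ valuation L phi.

Definition phi_convergent {d} (V : latticeType d) (L : V -> Prop) (E : porderZmodType)
  (phi : V -> E) (a : nat -> V) : Prop :=
  (forall n, L (a n)) /\ decreasing a /\
  (exists x, is_inf a x) /\ (exists e, is_inf (fun n => phi (a n)) e).

Definition PiL {d} (V : latticeType d) (L : V -> Prop) (E : porderZmodType)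
  (phi : V -> E) : V -> Prop :=
  fun x => exists a : nat -> V, phi_convergent L phi a /\ is_inf a x.

(* Meets of decreasing sequences pass to the infimum in any lattice, and so do
   joins once sigma-distributivity is used in each argument separately (the
   double sequence a_m \/ b_n is controlled by its diagonal since both
   sequences decrease).  For phi-convergence, the valuation identity
   phi (a_n /\ b_n) + phi (a_n \/ b_n) = phi a_n + phi b_n exhibits a sum of two
   decreasing sequences with an infimum, so R-completeness yields infima of
   phi (a_n /\ b_n) and phi (a_n \/ b_n) separately. *)

From mathcomp Require Import all_boot all_order all_algebra.
Import Order.TTheory Order.NatMonotonyTheory GRing.Theory.
Local Open Scope order_scope.
Set Implicit Arguments. Unset Strict Implicit.

Lemma eq_is_inf d (T : porderType d) (s t : nat -> T) x :
  s =1 t -> is_inf s x -> is_inf t x.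
Proof.
move=> est [lb glb]; split=> [n|y ley]; first by rewrite -est.
by apply: glb => n; rewrite est.
Qed.

Lemma is_inf_cst d (T : porderType d) (x : T) : is_inf (fun=> x) x.
Proof. by split=> // y; apply; exact: 0%N. Qed.

Lemma decreasingI d (T : latticeType d) (a b : nat -> T) :
  decreasing a -> decreasing b -> decreasing (fun n => a n `&` b n).
Proof. by move=> da db n; apply: leI2. Qed.

Lemma decreasingU d (T : latticeType d) (a b : nat -> T) :
  decreasing a -> decreasing b -> decreasing (fun n => a n `|` b n).
Proof. by move=> da db n; apply: leU2. Qed.

Lemma is_infI d (T : latticeType d) (a b : nat -> T) x y :
  is_inf a x -> is_inf b y -> is_inf (fun n => a n `&` b n) (x `&` y).
Proof.
move=> [lbx glbx] [lby glby]; split=> [n|z lez]; first exact: leI2 (lbx n) (lby n).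
rewrite lexI glbx ?glby // => n; apply: le_trans (lez n) _;
  [exact: leIr | exact: leIl].
Qed.

Lemma is_infU d (T : latticeType d) (a b : nat -> T) x y :
  (forall c (s : nat -> T) z, is_inf s z -> is_inf (fun n => c `|` s n) (c `|` z)) ->
  decreasing a -> decreasing b -> is_inf a x -> is_inf b y ->
  is_inf (fun n => a n `|` b n) (x `|` y).
Proof.
move=> distr da db infx infy; split=> [n|z lez]; first exact: leU2 (infx.1 n) (infy.1 n).
have le_z_ab m n : z <= a m `|` b n.
  apply: le_trans (lez (maxn m n)) _.
  exact: leU2 (nonincnP da _ _ (leq_maxl m n)) (nonincnP db _ _ (leq_maxr m n)).
have le_z_ay m : z <= a m `|` y by apply: (distr _ _ _ infy).2.
rewrite joinC; apply: (distr _ _ _ infx).2 => m; rewrite joinC; exact: le_z_ay.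
Qed.

Lemma is_infD (E : porderZmodType) (x y : nat -> E) u v :
  po_group E -> decreasing x -> decreasing y -> is_inf x u -> is_inf y v ->
  is_inf (fun n => x n + y n)%R (u + v)%R.
Proof.
move=> leD2r dx dy [lbu glbu] [lbv glbv].
have leD2l (z s t : E) : s <= t -> (z + s)%R <= (z + t)%R.
  by move=> le_st; rewrite ![(z + _)%R]addrC; apply: leD2r.
split=> [n|w lew]; first exact: le_trans (leD2r _ _ _ (lbu n)) (leD2l _ _ _ (lbv n)).
have le_w_xy m n : w <= (x m + y n)%R.
  apply: le_trans (lew (maxn m n)) _.
  apply: le_trans (leD2r _ _ _ (nonincnP dx _ _ (leq_maxl m n))) _.
  exact/leD2l/(nonincnP dy)/leq_maxr.
have le_wy_u n : (w - y n)%R <= u.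
  by apply: glbu => m; rewrite -(addrK (y n) (x m)); apply/leD2r/le_w_xy.
have le_wu_v : (w - u)%R <= v.
  apply: glbv => n; have := leD2r _ _ (y n - u)%R (le_wy_u n).
  by rewrite subrKA [(u + _)%R]addrC subrK.
by have := leD2r _ _ u le_wu_v; rewrite subrK addrC.
Qed.

Lemma PiL_of_L d (V : latticeType d) (L : V -> Prop) (E : porderZmodType)
    (phi : V -> E) a :
  L a -> PiL L phi a.
Proof.
move=> La; exists (fun=> a); split; last exact: is_inf_cst.
split=> //; split=> //; split; [exists a | exists (phi a)]; exact: is_inf_cst.
Qed.

Section PiLSublattice.

Variables (d : Order.disp_t) (V : latticeType d) (L : V -> Prop).
Variables (E : porderZmodType) (phi : V -> E).

Hypothesis sublattice_L : sublattice L.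
Hypothesis po_group_E : po_group E.
Hypothesis ex_inf_summands : forall x y : nat -> E, decreasing x -> decreasing y ->
  (exists z, is_inf (fun n => x n + y n)%R z) ->
  (exists u, is_inf x u) /\ (exists v, is_inf y v).
Hypothesis phi_homo : forall a b, L a -> L b -> a <= b -> phi a <= phi b.
Hypothesis phi_modular : forall a b, L a -> L b ->
  (phi (a `&` b) + phi (a `|` b))%R = (phi a + phi b)%R.
Hypothesis joinl_is_inf : forall c (s : nat -> V) z,
  is_inf s z -> is_inf (fun n => c `|` s n) (c `|` z).

Lemma decreasing_phi (a : nat -> V) :
  (forall n, L (a n)) -> decreasing a -> decreasing (fun n => phi (a n)).
Proof. by move=> La da n; apply: phi_homo. Qed.

Section TwoSequences.

Variables a b : nat -> V.
Hypotheses (conv_a : phi_convergent L phi a) (conv_b : phi_convergent L phi b).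

Let La : forall n, L (a n). Proof. by case: conv_a. Qed.
Let Lb : forall n, L (b n). Proof. by case: conv_b. Qed.
Let da : decreasing a. Proof. by case: conv_a => _ []. Qed.
Let db : decreasing b. Proof. by case: conv_b => _ []. Qed.
Let LI n : L (a n `&` b n). Proof. exact: (sublattice_L (La n) (Lb n)).1. Qed.
Let LU n : L (a n `|` b n). Proof. exact: (sublattice_L (La n) (Lb n)).2. Qed.

Lemma ex_inf_phiIU :
  (exists e, is_inf (fun n => phi (a n `&` b n)) e) /\
  (exists e, is_inf (fun n => phi (a n `|` b n)) e).
Proof.
apply: ex_inf_summands; [exact: decreasing_phi (decreasingI da db)
                        | exact: decreasing_phi (decreasingU da db) |].
have [_ [_ [_ [ea infa]]]] := conv_a; have [_ [_ [_ [eb infb]]]] := conv_b.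
exists (ea + eb)%R; apply: eq_is_inf (is_infD po_group_E _ _ infa infb).
- by move=> n /=; rewrite phi_modular.
- exact: decreasing_phi.
- exact: decreasing_phi.
Qed.

Lemma PiL_meet x y : is_inf a x -> is_inf b y -> PiL L phi (x `&` y).
Proof.
move=> infx infy; exists (fun n => a n `&` b n); split; last exact: is_infI.
split=> //; split; first exact: decreasingI.
by split; [exists (x `&` y); exact: is_infI | exact: ex_inf_phiIU.1].
Qed.

Lemma PiL_join x y : is_inf a x -> is_inf b y -> PiL L phi (x `|` y).
Proof.
move=> infx infy; exists (fun n => a n `|` b n).
have infU := is_infU joinl_is_inf da db infx infy.
split=> //; split=> //; split; first exact: decreasingU.
by split; [exists (x `|` y) | exact: ex_inf_phiIU.2].
Qed.

End TwoSequences.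

Lemma sublattice_PiL : sublattice (PiL L phi).
Proof.
move=> x y [a [conv_a infx]] [b [conv_b infy]].
by split; [exact: PiL_meet infx infy | exact: PiL_join infx infy].
Qed.

End PiLSublattice.

Theorem lemma5p2 (d : Order.disp_t) (V : latticeType d) (L : V -> Prop) (E : porderZmodType)
  (phi : V -> E) :
  valuation_system L phi ->
  sublattice (PiL L phi) /\ (forall a, L a -> PiL L phi a).
Proof.
move=> [[joinl_is_inf _] [sublattice_L [po_group_E
  [[ex_inf_summands _] [phi_homo phi_modular]]]]].
split; last exact: PiL_of_L.
exact: sublattice_PiL phi_modular joinl_is_inf.
Qed.
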